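(* Let $M,K$ be real anti-symmetric $m\times m$ matrices, $S:\mathbb R^m\to\mathbb R$ smooth, $A$ a real symmetric and $B$ a real anti-symmetric $m\times m$ matrix. Let $\mathbf z_h$ be a solution of the semi-discrete DG scheme described in the context. Suppose $d\mathbf z_h$ and $d\breve{\mathbf z}_h$ are continuously differentiable functions of $t$ with values in $\mathbf V_h$, each satisfying, for every $j$ and every $\boldsymbol\varphi\in\mathbf V_h$, the variational equation $$\int_{I_j}M\,\partial_t(d\mathbf z_h)\cdot\boldsymbol\varphi\,dx-\int_{I_j}K\,d\mathbf z_h\cdot\partial_x\boldsymbol\varphi\,dx+\big(\widehat{K d\mathbf z_h}\cdot\boldsymbol\varphi^-\big)_{j+\frac12}-\big(\widehat{K d\mathbf z_h}\cdot\boldsymbol\varphi^+\big)_{j-\frac12}=\int_{I_j}\nabla_{\mathbf z\mathbf z}S(\mathbf z_h)\,d\mathbf z_h\cdot\boldsymbol\varphi\,dx,$$ where $\widehat{K d\mathbf z_h}=K\{d\mathbf z_h\}+A[d\mathbf z_h]+B\,\partial_t[d\mathbf z_h]$ at each interface. Define $$\omega_{h,j}=\int_{I_j}M\,d\mathbf z_h\cdot d\breve{\mathbf z}_h\,dx+\tfrac12\big(B[d\breve{\mathbf z}_h]\cdot[d\mathbf z_h]\big)_{j+\frac12}+\tfrac12\big(B[d\breve{\mathbf z}_h]\cdot[d\mathbf z_h]\big)_{j-\frac12}$$ and, at each interface, $\mathcal F(d\mathbf z_h,d\breve{\mathbf z}_h)=\{K\,d\mathbf z_h\cdot d\breve{\mathbf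 z}_h\}-\widehat{K d\mathbf z_h}\cdot\{d\breve{\mathbf z}_h\}+\widehat{K d\breve{\mathbf z}_h}\cdot\{d\mathbf z_h\}$. Then for every $j$, $$\frac{d}{dt}\omega_{h,j}-\mathcal F(d\mathbf z_h,d\breve{\mathbf z}_h)_{j+\frac12}+\mathcal F(d\mathbf z_h,d\breve{\mathbf z}_h)_{j-\frac12}=0.$$
   Context: Mesh and spaces: a one-dimensional domain $\Omega$ is partitioned into cells $I_j=[x_{j-1/2},x_{j+1/2}]$, $j=1,\dots,N$, with periodic boundary conditions (interface indices taken modulo $N$). For fixed $k\ge 0$, $V_h=\{v\in L^2(\Omega): v|_{I_j}\text{ is a polynomial of degree}\le k\ \forall j\}$ and $\mathbf V_h=(V_h)^m$. For $\mathbf v\in\mathbf V_h$, $\mathbf v^+_{j+1/2}$ and $\mathbf v^-_{j+1/2}$ are its right and left limits at $x_{j+1/2}$; $\{\mathbf v\}=\frac12(\mathbf v^++\mathbf v^-)$, $[\mathbf v]=\mathbf v^+-\mathbf v^-$, and $\{K\mathbf v\cdot\mathbf w\}=\frac12(K\mathbf v^+\cdot\mathbf w^++K\mathbf v^-\cdot\mathbf w^-)$. Subscript $j\pm\frac12$ means evaluation at $x_{j\pm1/2}$. The semi-discrete DG scheme: find $\mathbf z_h(t)\in\mathbf V_h$, continuously differentiable in $t$, such that for all $j$ and all $\boldsymbol\varphi\in\mathbf V_h$, $$\int_{I_j}M\partial_t\mathbf z_h\cdot\boldsymbol\varphi\,dx-\int_{I_j}K\mathbf z_h\cdot\partial_x\boldsymbol\varphi\,dx+\big(\widehat{K\mathbf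 z_h}\cdot\boldsymbol\varphi^-\big)_{j+\frac12}-\big(\widehat{K\mathbf z_h}\cdot\boldsymbol\varphi^+\big)_{j-\frac12}=\int_{I_j}\nabla_{\mathbf z}S(\mathbf z_h)\cdot\boldsymbol\varphi\,dx,$$ with numerical flux $\widehat{K\mathbf z_h}=K\{\mathbf z_h\}+A[\mathbf z_h]+B\,\partial_t[\mathbf z_h]$ at each interface. This is a discretization of the multi-symplectic Hamiltonian PDE $M\mathbf z_t+K\mathbf z_x=\nabla_{\mathbf z}S(\mathbf z)$. $\nabla_{\mathbf z\mathbf z}S$ is the Hessian of $S$. *)

From HB Require Import structures.
From mathcomp Require Import all_boot all_order all_algebra.
From mathcomp Require Import all_classical all_reals all_analysis.
Set Implicit Arguments. Unset Strict Implicit. Unset Printing Implicit Defensive.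
Import Order.TTheory GRing.Theory Num.Theory.
Import numFieldNormedType.Exports.
Local Open Scope classical_set_scope.
Local Open Scope ring_scope.

(* Cells are indexed by j : 'I_N (0-based; the paper's cell I_{j+1}).
   [xs : nat -> R] lists the nodes x_{1/2} < x_{3/2} < ... < x_{N+1/2}:
   cell j is [xs j, xs j.+1].
   An element of V_h^m = (V_h)^m is given cellwise: v j c is the polynomial
   (of degree <= k) equal to the c-th component of v on cell j.
   Interfaces are indexed by i : 'I_N: interface i is the right end of cell
   i, i.e. x_{i+1/2} (paper numbering shifted by one); periodicity:
   its right neighbour cell is [ordS i] (= i+1 mod N), and the left
   interface of cell j is interface [ord_pred j] (= j-1 mod N).            *)

Definition dgfun (R : realType) (m N : nat) := 'I_N -> 'I_m -> {poly R}.

Section DG.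
Variables (R : realType) (m N : nat).

Definition inVh (k : nat) (v : dgfun R m N) : Prop :=
  forall (j : 'I_N) (c : 'I_m), (size (v j c) <= k.+1)%N.

Definition dot (u w : 'cV[R]_m) : R := \sum_(c < m) u c 0 * w c 0.

Definition ev (v : dgfun R m N) (j : 'I_N) (x : R) : 'cV[R]_m :=
  \col_c (v j c).[x].
Definition evdx (v : dgfun R m N) (j : 'I_N) (x : R) : 'cV[R]_m :=
  \col_c ((v j c)^`()).[x].

Variable xs : nat -> R.

Definition cellint (j : 'I_N) (f : R -> R) : R :=
  \int[lebesgue_measure]_(x in `[xs j, xs j.+1]) f x.

Definition trm (v : dgfun R m N) (i : 'I_N) : 'cV[R]_m :=
  ev v i (xs (i : nat).+1).
Definition trp (v : dgfun R m N) (i : 'I_N) : 'cV[R]_m :=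
  ev v (ordS i) (xs (ordS i : nat)).

Definition jmp (v : dgfun R m N) (i : 'I_N) : 'cV[R]_m := trp v i - trm v i.
Definition avg (v : dgfun R m N) (i : 'I_N) : 'cV[R]_m :=
  2^-1 *: (trp v i + trm v i).
Definition avgdot (K : 'M[R]_m) (v w : dgfun R m N) (i : 'I_N) : R :=
  2^-1 * (dot (K *m trp v i) (trp w i) + dot (K *m trm v i) (trm w i)).

Definition dtev (u : R -> dgfun R m N) (t : R) (j : 'I_N) (x : R)
  : 'cV[R]_m := \col_c derive1 (fun s => (u s j c).[x]) t.
Definition dtjmp (u : R -> dgfun R m N) (t : R) (i : 'I_N) : 'cV[R]_m :=
  \col_c derive1 (fun s => jmp (u s) i c 0) t.

Definition flux (K A B : 'M[R]_m) (u : R -> dgfun R m N) (t : R)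
  (i : 'I_N) : 'cV[R]_m :=
  K *m avg (u t) i + A *m jmp (u t) i + B *m dtjmp u t i.

Definition C1Vh (k : nat) (u : R -> dgfun R m N) : Prop :=
  (forall t, inVh k (u t)) /\
  (forall (j : 'I_N) (c : 'I_m) (n : nat),
     (forall t, derivable (fun s => (u s j c)`_n) t 1) /\
     continuous (fun t => derive1 (fun s => (u s j c)`_n) t)).

Definition dg_lhs (M K A B : 'M[R]_m) (u : R -> dgfun R m N) (t : R)
  (j : 'I_N) (phi : dgfun R m N) : R :=
  cellint j (fun x => dot (M *m dtev u t j x) (ev phi j x))
  - cellint j (fun x => dot (K *m ev (u t) j x) (evdx phi j x))
  + dot (flux K A B u t j) (trm phi j)
  - dot (flux K A B u t (ord_pred j)) (trp phi (ord_pred j)).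

End DG.

Section Calc.
Variables (R : realType) (m : nat).

Definition partial (c : 'I_m) (f : 'cV[R]_m -> R) (z : 'cV[R]_m) : R :=
  derive1 (fun s : R => f (z + s *: delta_mx c 0)) 0.

Fixpoint ipartial (s : seq 'I_m) (f : 'cV[R]_m -> R) : 'cV[R]_m -> R :=
  match s with
  | [::] => f
  | c :: s' => partial c (ipartial s' f)
  end.

Definition smooth (f : 'cV[R]_m -> R) : Prop :=
  forall s : seq 'I_m,
    continuous (ipartial s f) /\
    (forall (c : 'I_m) (z : 'cV[R]_m),
        derivable (fun r : R => ipartial s f (z + r *: delta_mx c 0)) 0 1).

Definition grad (f : 'cV[R]_m -> R) (z : 'cV[R]_m) : 'cV[R]_m :=
  \col_c partial c f z.

Definition hess (f : 'cV[R]_m -> R) (z : 'cV[R]_m) : 'M[R]_m :=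
  \matrix_(a, b) partial a (partial b f) z.

End Calc.

Section Scheme.
Variables (R : realType) (m N k : nat) (xs : nat -> R)
  (M K A B : 'M[R]_m) (S : 'cV[R]_m -> R).

Definition is_DG_solution (z : R -> dgfun R m N) : Prop :=
  C1Vh k z /\
  forall (t : R) (j : 'I_N) (phi : dgfun R m N), inVh k phi ->
    dg_lhs xs M K A B z t j phi
    = cellint xs j (fun x => dot (grad S (ev (z t) j x)) (ev phi j x)).

Definition is_variational_solution (z dz : R -> dgfun R m N) : Prop :=
  C1Vh k dz /\
  forall (t : R) (j : 'I_N) (phi : dgfun R m N), inVh k phi ->
    dg_lhs xs M K A B dz t j phi
    = cellint xs j (fun x =>
        dot (hess S (ev (z t) j x) *m ev (dz t) j x) (ev phi j x)).

Definition omega (dz dzb : R -> dgfun R m N) (j : 'I_N) (t : R) : R :=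
  cellint xs j (fun x => dot (M *m ev (dz t) j x) (ev (dzb t) j x))
  + 2^-1 * dot (B *m jmp xs (dzb t) j) (jmp xs (dz t) j)
  + 2^-1 * dot (B *m jmp xs (dzb t) (ord_pred j))
                 (jmp xs (dz t) (ord_pred j)).

Definition Fnum (dz dzb : R -> dgfun R m N) (t : R) (i : 'I_N) : R :=
  avgdot xs K (dz t) (dzb t) i
  - dot (flux xs K A B dz t i) (avg xs (dzb t) i)
  + dot (flux xs K A B dzb t i) (avg xs (dz t) i).

End Scheme.

From HB Require Import structures.
From mathcomp Require Import all_boot all_order all_algebra.
From mathcomp Require Import all_classical all_reals all_analysis.
From mathcomp Require Import ring lra.

(* Write v, w for dz, dzb.  Differentiating omega_{h,j} in t only needs the
   product rule, once the cell integral of M v . w is expanded in the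
   monomials of the cell polynomials (the coefficients are C^1 in t).
   Testing the variational equation of v with w and that of w with v gives
   equal right-hand sides, since the Hessian of S is symmetric (Schwarz's
   theorem: the MVT applied twice to a second difference).  In the
   difference of the two left-hand sides, antisymmetry of M produces
   d/dt of the cell integral, antisymmetry of K and integration by parts
   turn the volume K-terms into traces at both ends of the cell, and an
   algebraic identity at each interface (A symmetric, B antisymmetric)
   collects traces, fluxes and d/dt of the jump terms into F at the two
   end points. *)

Set Implicit Arguments.
Unset Strict Implicit.
Unset Printing Implicit Defensive.
Import Order.TTheory GRing.Theory Num.Theory.
Import numFieldNormedType.Exports.
Local Open Scope ring_scope.

Section PolyIntegral.
Context {R : realType}.

Definition poly_int (a b : R) (p : {poly R}) : R :=
  \int[lebesgue_measure]_(x in `[a, b]) p.[x].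

Lemma integrable_horner (a b : R) (p : {poly R}) :
  lebesgue_measure.-integrable `[a, b] (EFin \o horner p).
Proof.
apply: continuous_compact_integrable; first exact: segment_compact.
exact/continuous_subspaceT/continuous_horner.
Qed.

Lemma poly_int_is_linear (a b : R) : linear_for *%R (poly_int a b).
Proof.
move=> c p q; rewrite /poly_int.
under eq_Rintegral do rewrite hornerD.
rewrite RintegralD //; [|exact: integrable_horner..].
under eq_Rintegral do rewrite hornerZ.
by rewrite RintegralZl //; exact: integrable_horner.
Qed.

HB.instance Definition _ (a b : R) :=
  GRing.isLinear.Build R {poly R} R *%R (poly_int a b) (poly_int_is_linear a b).

Lemma poly_int_deriv (a b : R) (p : {poly R}) : a < b ->
  poly_int a b p^`() = p.[b] - p.[a].
Proof.
move=> ab; rewrite /poly_int /Rintegral.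
rewrite (@continuous_FTC2 _ (horner p^`()) (horner p) _ _ ab) //.
- exact/continuous_subspaceT/continuous_horner.
- split=> [x _||]; first exact: derivable_horner.
  + exact/cvg_at_right_filter/continuous_horner.
  + exact/cvg_at_left_filter/continuous_horner.
- by move=> x _; rewrite -derivE.
Qed.

End PolyIntegral.

Section RealDerive.
Context {R : realType}.
Implicit Types (f g : R -> R) (t : R).

Lemma is_derive_mul f g t df dg : is_derive t 1 f df -> is_derive t 1 g dg ->
  is_derive t 1 (fun s => f s * g s) (df * g t + f t * dg).
Proof.
move=> hf hg; rewrite (_ : _ + _ = f t *: dg + g t *: df); first exact: is_deriveM.
by rewrite addrC [df * _]mulrC.
Qed.

Lemma is_derive_bigsum n (F : 'I_n -> R -> R) (dF : 'I_n -> R) t :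
  (forall i, is_derive t 1 (F i) (dF i)) ->
  is_derive t 1 (fun s => \sum_(i < n) F i s) (\sum_(i < n) dF i).
Proof.
move=> hF; rewrite (_ : (fun s => _) = \sum_(i < n) F i); first exact: is_derive_sum.
by apply/funext => s; rewrite fct_sumE.
Qed.

End RealDerive.

Section PolyDerive.
Context {R : realType}.
Implicit Types (p q : R -> {poly R}) (t : R).

Definition is_derive_coef t p (dp : {poly R}) : Prop :=
  forall i, is_derive t 1 (fun s => (p s)`_i) dp`_i.

Lemma is_derive_coefM t p q dp dq :
  is_derive_coef t p dp -> is_derive_coef t q dq ->
  is_derive_coef t (fun s => p s * q s) (dp * q t + p t * dq).
Proof.
move=> hp hq i; rewrite coefD !coefM -big_split /=.
under eq_fun do rewrite coefM.
by apply: is_derive_bigsum => l; apply: is_derive_mul.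
Qed.

Lemma is_derive_scalar_poly (L : {scalar {poly R}}) {n : nat} {t p} {dp : {poly R}} :
  (forall s, (size (p s) <= n)%N) -> is_derive_coef t p dp ->
  is_derive t 1 (fun s => L (p s)) (L dp).
Proof.
move=> hs hp.
have expand (r : {poly R}) : (size r <= n)%N -> L r = \sum_(i < n) r`_i * L 'X^i.
  move=> hr; transitivity (L (\sum_(i < n) r`_i *: 'X^i)).
    congr (L _); rewrite -poly_def; apply/polyP => i; rewrite coef_poly.
    by case: ltnP => // /(leq_trans hr) /leq_sizeP ->.
  by rewrite linear_sum; apply: eq_bigr => i _; rewrite linearZ.
have hdp : (size dp <= n)%N.
  apply/leq_sizeP => i hi.
  have coef0 : (fun s => (p s)`_i) = cst 0.
    by apply/funext => s; apply/leq_sizeP: hi; exact: hs.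
  have := hp i; rewrite coef0 => hd.
  by rewrite -(@derive_val _ _ _ _ _ _ _ hd) derive_cst.
under eq_fun do rewrite (expand _ (hs _)).
rewrite (expand dp hdp); apply: is_derive_bigsum => i.
apply: is_derive_eq; first exact: is_derive_mul (hp i) (is_derive_cst (L 'X^i) t 1).
by rewrite mulr0 addr0.
Qed.

End PolyDerive.

Lemma continuous_eq_near {R : realType} {T : pseudoMetricType R} {G1 G2 : T -> R}
    {z : T} :
  {for z, continuous G1} -> {for z, continuous G2} ->
  (forall d, 0 < d -> exists P Q, [/\ ball z d P, ball z d Q & G1 P = G2 Q]) ->
  G1 z = G2 z.
Proof.
move=> c1 c2 near_eq; apply/eqP/negPn/negP => neq.
pose eps := `|G1 z - G2 z| / 2.
have eps_gt0 : 0 < eps by rewrite divr_gt0 // normr_gt0 subr_eq0.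
have n1 : \forall y \near z, `|G1 z - G1 y| < eps by exact: cvgr_dist_lt.
have n2 : \forall y \near z, `|G2 z - G2 y| < eps by exact: cvgr_dist_lt.
have [d d_gt0 hd] := iffLR (nbhs_ballP _ _) (filterI n1 n2).
have [P [Q [zP zQ eqPQ]]] := near_eq d d_gt0.
have [h1 _] := hd _ zP; have [_ h2] := hd _ zQ.
rewrite -eqPQ in h2; have := ler_distD (G1 P) (G1 z) (G2 z).
by rewrite (distrC (G1 P)); move: h1 h2; rewrite /eps; lra.
Qed.

Section MixedPartials.
Variables (R : realType) (m : nat).
Implicit Types (f : 'cV[R]_m -> R) (a b c : 'I_m) (z : 'cV[R]_m).
Local Notation e c := (delta_mx c 0 : 'cV[R]_m).

Definition partially_derivable c f : Prop :=
  forall z, derivable (fun r : R => f (z + r *: e c)) 0 1.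

Lemma is_derive_partial f c z (r0 : R) : partially_derivable c f ->
  is_derive r0 1 (fun r : R => f (z + r *: e c)) (partial c f (z + r0 *: e c)).
Proof.
move=> hd.
pose F r := f (z + r *: e c); pose G r := f ((z + r0 *: e c) + r *: e c).
have shiftFG : (fun h : R => h^-1 *: ((F \o shift r0) (h *: 1) - F r0))
             = (fun h => h^-1 *: ((G \o shift 0) (h *: 1) - G 0)).
  apply/funext => h; rewrite /F /G /= !addr0 scale0r addr0 scalerDl addrA.
  by rewrite (addrAC z).
apply: DeriveDef; first by rewrite /derivable shiftFG; exact: hd.
by rewrite /partial derive1E /derive shiftFG.
Qed.

Definition diff2 f a b z (h : R) : R :=
  f (z + h *: e a + h *: e b) - f (z + h *: e a) - f (z + h *: e b) + f z.

Lemma diff2C f a b z h : diff2 f a b z h = diff2 f b a z h.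
Proof. by rewrite /diff2 (addrAC z); ring. Qed.

Lemma diff2_mvt f a b z h : 0 < h ->
  partially_derivable a f -> partially_derivable b (partial a f) ->
  exists xi eta, [/\ 0 < xi < h, 0 < eta < h &
    diff2 f a b z h = h * h * partial b (partial a f) (z + xi *: e a + eta *: e b)].
Proof.
move=> h_gt0 da db.
pose g (s : R) := f (z + h *: e b + s *: e a) - f (z + s *: e a).
have dg (s : R) : is_derive s 1 g
    (partial a f (z + h *: e b + s *: e a) - partial a f (z + s *: e a)).
  by apply: is_deriveB; exact: is_derive_partial.
have [xi xi_in gxi] := MVT h_gt0 (fun x _ => dg x)
  (derivable_within_continuous (fun x _ => @ex_derive _ _ _ _ _ _ _ (dg x))).
pose phi (r : R) := partial a f (z + xi *: e a + r *: e b).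
have dphi (r : R) :
    is_derive r 1 phi (partial b (partial a f) (z + xi *: e a + r *: e b)).
  exact: is_derive_partial.
have [eta eta_in phieta] := MVT h_gt0 (fun x _ => dphi x)
  (derivable_within_continuous (fun x _ => @ex_derive _ _ _ _ _ _ _ (dphi x))).
exists xi, eta; split; [by rewrite in_itv in xi_in | by rewrite in_itv in eta_in |].
move: gxi phieta; rewrite /g /phi !scale0r !addr0 subr0 (addrAC z (xi *: e a)).
have -> : diff2 f a b z h
  = f (z + h *: e b + h *: e a) - f (z + h *: e a) - (f (z + h *: e b) - f z).
  by rewrite /diff2 (addrAC z (h *: e a)); ring.
by move=> -> ->; ring.
Qed.

Lemma ball_add_delta z c c' (xi eta d : R) : 0 <= xi -> 0 <= eta -> xi + eta < d ->
  ball z d (z + xi *: e c + eta *: e c').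
Proof.
move=> xi_ge0 eta_ge0 lt_d.
have d_gt0 : 0 < d by lra.
rewrite /ball /=; split => // i j; rewrite /ball /= !mxE.
set b1 := (_ && _)%:R; set b2 := (_ && _)%:R.
have -> : z i j - (z i j + xi * b1 + eta * b2) = - (xi * b1 + eta * b2) by ring.
rewrite normrN /b1 /b2; case: (_ && _); case: (_ && _);
  by rewrite ?mulr1 ?mulr0 ?addr0 ?add0r ?normr0 // ger0_norm; lra.
Qed.

Lemma partialC f a b z :
  partially_derivable a f -> partially_derivable b f ->
  partially_derivable b (partial a f) -> partially_derivable a (partial b f) ->
  continuous (partial b (partial a f)) -> continuous (partial a (partial b f)) ->
  partial b (partial a f) z = partial a (partial b f) z.
Proof.
move=> da db dab dba cab cba.
apply: (continuous_eq_near (cab z) (cba z)) => d d_gt0.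
have h_gt0 : 0 < d / 4 by rewrite divr_gt0.
have [xi [eta [/andP[xi0 xi1] /andP[eta0 eta1] Eab]]] := diff2_mvt z h_gt0 da dab.
have [xi' [eta' [/andP[xi0' xi1'] /andP[eta0' eta1'] Eba]]] := diff2_mvt z h_gt0 db dba.
exists (z + xi *: e a + eta *: e b), (z + xi' *: e b + eta' *: e a); split.
- apply: ball_add_delta; [exact: ltW | exact: ltW |].
  by clear -xi1 eta1 d_gt0; lra.
- apply: ball_add_delta; [exact: ltW | exact: ltW |].
  by clear -xi1' eta1' d_gt0; lra.
have hh_neq0 : d / 4 * (d / 4) != 0 by rewrite mulf_neq0 // gt_eqF.
apply: (mulfI hh_neq0).
exact: etrans (esym Eab) (etrans (diff2C _ _ _ _ _) Eba).
Qed.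

Lemma hess_sym (S : 'cV[R]_m -> R) z : smooth S -> (hess S z)^T = hess S z.
Proof.
move=> hS; apply/matrixP => a b; rewrite !mxE.
by apply: partialC; [exact: (hS [::]).2 | exact: (hS [::]).2 | exact: (hS [:: a]).2
  | exact: (hS [:: b]).2 | exact: (hS [:: b; a]).1 | exact: (hS [:: a; b]).1].
Qed.

End MixedPartials.

Section DotAlgebra.
Context {R : realType} {m : nat}.
Implicit Types (u v w : 'cV[R]_m) (X : 'M[R]_m).

Lemma dotDl u v w : dot (u + v) w = dot u w + dot v w.
Proof. by rewrite /dot -big_split; apply: eq_bigr => c _; rewrite mxE mulrDl. Qed.

Lemma dotDr u v w : dot w (u + v) = dot w u + dot w v.
Proof. by rewrite /dot -big_split; apply: eq_bigr => c _; rewrite mxE mulrDr. Qed.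

Lemma dotZl a u w : dot (a *: u) w = a * dot u w.
Proof. by rewrite /dot mulr_sumr; apply: eq_bigr => c _; rewrite mxE mulrA. Qed.

Lemma dotZr a u w : dot w (a *: u) = a * dot w u.
Proof. by rewrite /dot mulr_sumr; apply: eq_bigr => c _; rewrite mxE mulrCA. Qed.

Lemma dotNl u w : dot (- u) w = - dot u w.
Proof. by rewrite -scaleN1r dotZl mulN1r. Qed.

Lemma dotNr u w : dot w (- u) = - dot w u.
Proof. by rewrite -scaleN1r dotZr mulN1r. Qed.

Lemma dot_mulmx_tr X v w : dot (X *m v) w = dot (X^T *m w) v.
Proof.
rewrite /dot; under eq_bigr do rewrite mxE mulr_suml.
under [RHS]eq_bigr do rewrite mxE mulr_suml.
rewrite exchange_big /=; apply: eq_bigr => c _; apply: eq_bigr => d _.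
by rewrite mxE mulrAC.
Qed.

End DotAlgebra.

(* [up], [um] are the traces v^+, v^- of dz at an interface and [du] the
   t-derivative of its jump; [wp], [wm], [dw] are the same for dzb.  In these
   variables [num_flux] is the numerical flux and [iface_flux] is F. *)
Section InterfaceFlux.
Context {R : realType} {m : nat}.
Variables (K A B : 'M[R]_m).

Definition num_flux (up um du : 'cV[R]_m) : 'cV[R]_m :=
  K *m (2^-1 *: (up + um)) + A *m (up - um) + B *m du.

Definition iface_flux (up um du wp wm dw : 'cV[R]_m) : R :=
  2^-1 * (dot (K *m up) wp + dot (K *m um) wm)
  - dot (num_flux up um du) (2^-1 *: (wp + wm))
  + dot (num_flux wp wm dw) (2^-1 *: (up + um)).

Hypotheses (antiK : K^T = - K) (symA : A^T = A) (antiB : B^T = - B).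
Variables (up um du wp wm dw : 'cV[R]_m).

Ltac dot_normalize :=
  rewrite /iface_flux /num_flux -!scalemxAr
    !(mulmxDr, mulmxN, dotDl, dotDr, dotZl, dotZr, dotNl, dotNr)
    ?(dot_mulmx_tr _ wp) ?(dot_mulmx_tr _ wm) ?(dot_mulmx_tr _ dw)
    antiK symA antiB !(mulNmx, dotNl).

Lemma iface_flux_left_trace :
  dot (K *m um) wm - dot (num_flux up um du) wm + dot (num_flux wp wm dw) um
  + 2^-1 * (dot (B *m dw) (up - um) + dot (B *m (wp - wm)) du)
  = iface_flux up um du wp wm dw.
Proof. dot_normalize; lra. Qed.

Lemma iface_flux_right_trace :
  dot (K *m up) wp - dot (num_flux up um du) wp + dot (num_flux wp wm dw) up
  - 2^-1 * (dot (B *m dw) (up - um) + dot (B *m (wp - wm)) du)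
  = iface_flux up um du wp wm dw.
Proof. dot_normalize; lra. Qed.

End InterfaceFlux.

Section FormPoly.
Context {R : realType} {m : nat}.
Implicit Types (X : 'M[R]_m) (p q : 'I_m -> {poly R}).

Definition form_poly X p q : {poly R} :=
  \sum_(c < m) \sum_(d < m) X c d *: (p d * q c).

Lemma horner_form_poly X p q (x : R) :
  (form_poly X p q).[x] = dot (X *m \col_c (p c).[x]) (\col_c (q c).[x]).
Proof.
rewrite /dot /form_poly horner_sum; apply: eq_bigr => c _.
rewrite horner_sum !mxE mulr_suml; apply: eq_bigr => d _.
by rewrite !mxE hornerZ hornerM mulrA.
Qed.

Lemma form_poly_tr X p q : form_poly X p q = form_poly X^T q p.
Proof.
rewrite /form_poly exchange_big /=; apply: eq_bigr => c _; apply: eq_bigr => d _.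
by rewrite mxE mulrC.
Qed.

Lemma form_polyN X p q : form_poly (- X) p q = - form_poly X p q.
Proof.
rewrite /form_poly -sumrN; apply: eq_bigr => c _.
by rewrite -sumrN; apply: eq_bigr => d _; rewrite mxE scaleNr.
Qed.

Lemma deriv_form_poly X p q : (form_poly X p q)^`()
  = form_poly X (fun c => (p c)^`()) q + form_poly X p (fun c => (q c)^`()).
Proof.
rewrite /form_poly raddf_sum -big_split; apply: eq_bigr => c _.
rewrite raddf_sum -big_split; apply: eq_bigr => d _.
by rewrite /= derivZ derivM scalerDr addrC.
Qed.

End FormPoly.

Section CellForm.
Variables (R : realType) (m N : nat) (xs : nat -> R).
Implicit Types (X : 'M[R]_m) (v w : dgfun R m N) (j : 'I_N).

Definition cell_form X v w j : R :=
  cellint xs j (fun x => dot (X *m ev v j x) (ev w j x)).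

Definition dgderiv v : dgfun R m N := fun j c => (v j c)^`().

Lemma cell_formE X v w j :
  cell_form X v w j = poly_int (xs j) (xs j.+1) (form_poly X (v j) (w j)).
Proof.
by rewrite /cell_form /poly_int; under [RHS]eq_Rintegral do rewrite horner_form_poly.
Qed.

Lemma cell_form_sum X v w j : cell_form X v w j
  = \sum_(c < m) \sum_(d < m) X c d * poly_int (xs j) (xs j.+1) (v j d * w j c).
Proof.
rewrite cell_formE linear_sum; apply: eq_bigr => c _.
by rewrite linear_sum; apply: eq_bigr => d _; rewrite linearZ.
Qed.

Lemma cell_form_antisym X v w j : X^T = - X ->
  cell_form X v w j = - cell_form X w v j.
Proof. by move=> antiX; rewrite !cell_formE form_poly_tr antiX form_polyN linearN. Qed.

Lemma cell_form_by_parts X v w j : xs j < xs j.+1 ->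
  cell_form X v (dgderiv w) j + cell_form X (dgderiv v) w j
  = dot (X *m trm xs v j) (trm xs w j)
    - dot (X *m trp xs v (ord_pred j)) (trp xs w (ord_pred j)).
Proof.
move=> mesh; rewrite !cell_formE addrC.
rewrite -linearD -deriv_form_poly /= poly_int_deriv // !horner_form_poly.
by rewrite /trm /trp ord_predK.
Qed.

End CellForm.

Section TimeDerivative.
Variables (R : realType) (m N k : nat) (xs : nat -> R).
Implicit Types (u w : R -> dgfun R m N) (t : R).

(* Truncating at degree k loses nothing when [C1Vh k u] holds. *)
Definition tderiv u t : dgfun R m N :=
  fun j c => \poly_(n < k.+1) derive1 (fun s => (u s j c)`_n) t.

Lemma is_derive_coef_tderiv u t j c : C1Vh k u ->
  is_derive_coef t (fun s => u s j c) (tderiv u t j c).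
Proof.
move=> [sizeu du] n; rewrite /tderiv coef_poly; case: ltnP => hn.
  by rewrite derive1E; apply: derivableP; exact: (du j c n).1.
rewrite (_ : (fun s => _) = cst 0); first exact: is_derive_cst.
by apply/funext => s; apply/leq_sizeP: hn; exact: sizeu.
Qed.

Lemma is_derive_horner_dg u t j c (x : R) : C1Vh k u ->
  is_derive t 1 (fun s => (u s j c).[x]) ((tderiv u t j c).[x]).
Proof.
move=> hu.
by have := is_derive_scalar_poly (horner_eval x) (fun s => hu.1 s j c)
  (is_derive_coef_tderiv t j c hu).
Qed.

Lemma dtev_tderiv u t j (x : R) : C1Vh k u -> dtev u t j x = ev (tderiv u t) j x.
Proof.
move=> hu; apply/matrixP => c d; rewrite !mxE derive1E.
exact: (@derive_val _ _ _ _ _ _ _ (is_derive_horner_dg t j c x hu)).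
Qed.

Lemma is_derive_jmp u t i c : C1Vh k u ->
  is_derive t 1 (fun s => jmp xs (u s) i c 0) (jmp xs (tderiv u t) i c 0).
Proof.
move=> hu; rewrite /jmp /trp /trm /ev !mxE.
under eq_fun do rewrite !mxE.
by apply: is_deriveB; exact: is_derive_horner_dg.
Qed.

Lemma dtjmp_tderiv u t i : C1Vh k u -> dtjmp xs u t i = jmp xs (tderiv u t) i.
Proof.
move=> hu; apply/matrixP => c d; rewrite !ord1 mxE derive1E.
exact: (@derive_val _ _ _ _ _ _ _ (is_derive_jmp t i c hu)).
Qed.

Lemma is_derive_cell_form (X : 'M[R]_m) u w t j : C1Vh k u -> C1Vh k w ->
  is_derive t 1 (fun s => cell_form xs X (u s) (w s) j)
    (cell_form xs X (tderiv u t) (w t) j + cell_form xs X (u t) (tderiv w t) j).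
Proof.
move=> hu hw; under eq_fun do rewrite cell_form_sum.
rewrite !cell_form_sum -big_split; apply: is_derive_bigsum => c /=.
rewrite -big_split; apply: is_derive_bigsum => d /=.
rewrite -mulrDr -linearD; apply: is_deriveZ.
apply: (is_derive_scalar_poly (poly_int _ _) (n := k.+1 + k.+1)).
  move=> s; apply: leq_trans (size_polyMleq _ _) _; rewrite -subn1 leq_subLR.
  by apply: leq_trans (leq_add (hu.1 s j d) (hw.1 s j c)) _; rewrite add1n.
by apply: is_derive_coefM; exact: is_derive_coef_tderiv.
Qed.

Lemma is_derive_dot_mulmx (X : 'M[R]_m) (f g : R -> 'cV[R]_m) (df dg : 'cV[R]_m) t :
  (forall c, is_derive t 1 (fun s => f s c 0) (df c 0)) ->
  (forall c, is_derive t 1 (fun s => g s c 0) (dg c 0)) ->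
  is_derive t 1 (fun s => dot (X *m f s) (g s))
    (dot (X *m df) (g t) + dot (X *m f t) dg).
Proof.
move=> hf hg; rewrite /dot -big_split.
under eq_fun do under eq_bigr do rewrite mxE.
apply: is_derive_bigsum => c /=; rewrite !mxE.
by apply: is_derive_mul (hg c); apply: is_derive_bigsum.
Qed.

End TimeDerivative.

Section Multisymplectic.
Variables (R : realType) (m N k : nat) (xs : nat -> R) (M K A B : 'M[R]_m).
Local Notation tderiv := (tderiv k).

Lemma dg_lhsE (u : R -> dgfun R m N) (t : R) (j : 'I_N) (phi : dgfun R m N) :
  C1Vh k u ->
  dg_lhs xs M K A B u t j phi
  = cell_form xs M (tderiv u t) phi j - cell_form xs K (u t) (dgderiv phi) j
    + dot (num_flux K A B (trp xs (u t) j) (trm xs (u t) j) (jmp xs (tderiv u t) j))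
          (trm xs phi j)
    - dot (num_flux K A B (trp xs (u t) (ord_pred j)) (trm xs (u t) (ord_pred j))
             (jmp xs (tderiv u t) (ord_pred j)))
          (trp xs phi (ord_pred j)).
Proof.
move=> hu; rewrite /dg_lhs.
have -> : cellint xs j (fun x => dot (M *m dtev u t j x) (ev phi j x))
          = cell_form xs M (tderiv u t) phi j.
  rewrite /cell_form /cellint.
  by under eq_Rintegral do rewrite (dtev_tderiv (k := k)) //.
by rewrite /flux !(dtjmp_tderiv (k := k)).
Qed.

Lemma FnumE (dz dzb : R -> dgfun R m N) (t : R) (i : 'I_N) :
  C1Vh k dz -> C1Vh k dzb ->
  Fnum xs K A B dz dzb t i
  = iface_flux K A B (trp xs (dz t) i) (trm xs (dz t) i) (jmp xs (tderiv dz t) i)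
      (trp xs (dzb t) i) (trm xs (dzb t) i) (jmp xs (tderiv dzb t) i).
Proof. by move=> hdz hdzb; rewrite /Fnum /flux !(dtjmp_tderiv (k := k)). Qed.

Lemma is_derive_omega_terms (dz dzb : R -> dgfun R m N) (t : R) (j : 'I_N) :
  C1Vh k dz -> C1Vh k dzb ->
  is_derive t 1 (omega xs M B dz dzb j)
    (cell_form xs M (tderiv dz t) (dzb t) j + cell_form xs M (dz t) (tderiv dzb t) j
     + 2^-1 * (dot (B *m jmp xs (tderiv dzb t) j) (jmp xs (dz t) j)
               + dot (B *m jmp xs (dzb t) j) (jmp xs (tderiv dz t) j))
     + 2^-1 * (dot (B *m jmp xs (tderiv dzb t) (ord_pred j)) (jmp xs (dz t) (ord_pred j))
               + dot (B *m jmp xs (dzb t) (ord_pred j))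
                     (jmp xs (tderiv dz t) (ord_pred j)))).
Proof.
move=> hdz hdzb; apply: is_deriveD; first apply: is_deriveD.
- exact: is_derive_cell_form.
- by apply: is_deriveZ; apply: is_derive_dot_mulmx => c; exact: is_derive_jmp.
- by apply: is_deriveZ; apply: is_derive_dot_mulmx => c; exact: is_derive_jmp.
Qed.

Lemma is_derive_omega (dz dzb : R -> dgfun R m N) (t : R) (j : 'I_N) :
  xs j < xs j.+1 -> M^T = - M -> K^T = - K -> A^T = A -> B^T = - B ->
  C1Vh k dz -> C1Vh k dzb ->
  is_derive t 1 (omega xs M B dz dzb j)
    (dg_lhs xs M K A B dz t j (dzb t) - dg_lhs xs M K A B dzb t j (dz t)
     + Fnum xs K A B dz dzb t j - Fnum xs K A B dz dzb t (ord_pred j)).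
Proof.
move=> mesh antiM antiK symA antiB hdz hdzb.
apply: is_derive_eq (is_derive_omega_terms t j hdz hdzb) _.
rewrite !dg_lhsE // !FnumE // [cell_form _ M (dz t) _ _]cell_form_antisym //.
have := cell_form_by_parts K (dz t) (dzb t) mesh.
rewrite [cell_form _ K (dgderiv _) _ _]cell_form_antisym //.
rewrite -(iface_flux_left_trace antiK symA antiB).
rewrite -(iface_flux_right_trace antiK symA antiB).
rewrite /jmp; lra.
Qed.

End Multisymplectic.

Lemma dg_lhs_variational_sym (R : realType) (m N k : nat) (xs : nat -> R)
    (M K A B : 'M[R]_m) (S : 'cV[R]_m -> R) (z dz dzb : R -> dgfun R m N)
    (t : R) (j : 'I_N) :
  smooth S ->
  is_variational_solution k xs M K A B S z dz ->
  is_variational_solution k xs M K A B S z dzb ->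
  dg_lhs xs M K A B dz t j (dzb t) = dg_lhs xs M K A B dzb t j (dz t).
Proof.
move=> hS [hdz Edz] [hdzb Edzb].
rewrite (Edz t j (dzb t) (hdzb.1 t)) (Edzb t j (dz t) (hdz.1 t)) /cellint.
by under eq_Rintegral do rewrite dot_mulmx_tr (hess_sym _ hS).
Qed.

Theorem theorem3p1 (R : realType) (m N k : nat) (xs : nat -> R)
  (M K A B : 'M[R]_m) (S : 'cV[R]_m -> R)
  (z dz dzb : R -> dgfun R m N) :
  (forall j : 'I_N, xs j < xs (j : nat).+1) ->
  M^T = - M -> K^T = - K -> A^T = A -> B^T = - B ->
  smooth S ->
  is_DG_solution k xs M K A B S z ->
  is_variational_solution k xs M K A B S z dz ->
  is_variational_solution k xs M K A B S z dzb ->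
  forall (t : R) (j : 'I_N),
    derivable (omega xs M B dz dzb j) t 1 /\
    derive1 (omega xs M B dz dzb j) t
      - Fnum xs K A B dz dzb t j + Fnum xs K A B dz dzb t (ord_pred j) = 0.
Proof.
move=> mesh antiM antiK symA antiB hS _ vdz vdzb t j.
have := is_derive_omega t (mesh j) antiM antiK symA antiB vdz.1 vdzb.1.
rewrite (dg_lhs_variational_sym t j hS vdz vdzb) subrr add0r => domega.
split; first exact: ex_derive.
by rewrite derive1E derive_val; lra.
Qed.
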